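(* In the setting of the context (QFSR5 scheme), suppose the flux $f$ is a quadratic polynomial in $u$, and take $\kappa=1/3$, $\kappa_3=-2/3$, $\theta_2=2/3$, $a=2/15$, $b=16/45$, $c=4/5$. Let $\mathcal{E}_j=(\Phi_{j+1/2}-\Phi_{j-1/2})/h$ evaluated on exact nodal values. Then as $h\to0$, $$\mathcal{E}_j=\frac{d}{dx}f(u(x))\Big|_{x=x_j}+O(h^5).$$
   Context: Let $h>0$, uniform grid $x_i=ih$, $i\in\mathbb{Z}$. Let $u$ be a smooth real function of $x$, $u_i=u(x_i)$; let $f$ (flux) and $D$ (dissipation coefficient) be smooth real functions of one variable. Define successive central differences $(u_x)_i=(u_{i+1}-u_{i-1})/(2h)$, $(u_{xx})_i=((u_x)_{i+1}-(u_x)_{i-1})/(2h)$. For the face $i+1/2$ with $j=i$, $k=i+1$, let $T_j=\frac h4((u_x)_k-(u_x)_j)-\frac{h^2}{4}(u_{xx})_j$, $T_k=\frac h4((u_x)_k-(u_x)_j)-\frac{h^2}{4}(u_{xx})_k$, and reconstructed states $u_L=\kappa\frac{u_j+u_k}{2}+(1-\kappa)[u_j+\frac h2(u_x)_j]+\kappa_3T_j$, $u_R=\kappa\frac{u_j+u_k}{2}+(1-\kappa)[u_k-\frac h2(u_x)_k]+\kappa_3T_k$. Let $\Delta_L=u_L-u_j$, $\Delta_R=u_R-u_k$, and with parameters $a,b,c,\theta_2$ define $L_j=aT_j$, $L_k=aT_k$, $Q_j=b\,f''(u_j)\big(\tfrac{h^2}{4}(u_{xx})_j\big)^2+c\,f''(u_j)\big(\tfrac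 h2(u_x)_j\big)T_j$, $Q_k=b\,f''(u_k)\big(\tfrac{h^2}{4}(u_{xx})_k\big)^2+c\,f''(u_k)\big(-\tfrac h2(u_x)_k\big)T_k$. The reconstructed fluxes are $f_L=f(u_j)+f'(u_j)(\Delta_L+L_j)+\frac{\theta_2}{2}\big(f''(u_j)\Delta_L^2+Q_j\big)$, $f_R=f(u_k)+f'(u_k)(\Delta_R+L_k)+\frac{\theta_2}{2}\big(f''(u_k)\Delta_R^2+Q_k\big)$. Numerical flux: $\Phi_{i+1/2}=\frac12(f_L+f_R)-\frac12D_{i+1/2}(u_R-u_L)$, with $D_{i+1/2}=\bar D(u_i,u_{i+1})$ for a smooth symmetric $\bar D$ with $\bar D(v,v)=D(v)$. *)

From Stdlib Require Import Reals ZArith List.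
Import ListNotations.
From Coquelicot Require Import Coquelicot.
Open Scope R_scope.

Definition smooth1 (g : R -> R) : Prop :=
  forall (n : nat) (x : R), ex_derive_n g n x.

(** Iterated partial derivatives of a function of two variables along a word
    [w] (true = d/dx, false = d/dy), the head of [w] being applied last. *)
Fixpoint ipd (w : list bool) (g : R -> R -> R) : R -> R -> R :=
  match w with
  | nil => g
  | cons b w' =>
      let k := ipd w' g in
      if b then (fun x y => Derive (fun s => k s y) x)
           else (fun x y => Derive (fun t => k x t) y)
  end.

Definition smooth2 (g : R -> R -> R) : Prop :=
  forall (w : list bool),
    (forall x y, ex_derive (fun s => ipd w g s y) x /\
                 ex_derive (fun t => ipd w g x t) y) /\
    (forall p : R * R, continuous (fun q : R * R => ipd w g (fst q) (snd q)) p).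

Section Scheme.
(* grid values v : Z -> R (v i = u_i), spacing h *)
Variables (kap kap3 th2 a b c : R) (f : R -> R) (Dbar : R -> R -> R).
Variables (v : Z -> R) (h : R).

Definition f1 (w : R) : R := Derive f w.
Definition f2 (w : R) : R := Derive (Derive f) w.

Definition ux (i : Z) : R := (v (i + 1)%Z - v (i - 1)%Z) / (2 * h).
Definition uxx (i : Z) : R := (ux (i + 1)%Z - ux (i - 1)%Z) / (2 * h).

(* face i+1/2 : j = i, k = i+1 *)
Definition Tj (i : Z) : R :=
  h / 4 * (ux (i + 1)%Z - ux i) - h ^ 2 / 4 * uxx i.
Definition Tk (i : Z) : R :=
  h / 4 * (ux (i + 1)%Z - ux i) - h ^ 2 / 4 * uxx (i + 1)%Z.

Definition uL (i : Z) : R :=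
  kap * ((v i + v (i + 1)%Z) / 2) + (1 - kap) * (v i + h / 2 * ux i)
  + kap3 * Tj i.
Definition uR (i : Z) : R :=
  kap * ((v i + v (i + 1)%Z) / 2)
  + (1 - kap) * (v (i + 1)%Z - h / 2 * ux (i + 1)%Z) + kap3 * Tk i.

Definition DeltaL (i : Z) : R := uL i - v i.
Definition DeltaR (i : Z) : R := uR i - v (i + 1)%Z.

Definition Lj (i : Z) : R := a * Tj i.
Definition Lk (i : Z) : R := a * Tk i.

Definition Qj (i : Z) : R :=
  b * f2 (v i) * (h ^ 2 / 4 * uxx i) ^ 2
  + c * f2 (v i) * (h / 2 * ux i) * Tj i.
Definition Qk (i : Z) : R :=
  b * f2 (v (i + 1)%Z) * (h ^ 2 / 4 * uxx (i + 1)%Z) ^ 2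
  + c * f2 (v (i + 1)%Z) * (- (h / 2 * ux (i + 1)%Z)) * Tk i.

Definition fL (i : Z) : R :=
  f (v i) + f1 (v i) * (DeltaL i + Lj i)
  + th2 / 2 * (f2 (v i) * DeltaL i ^ 2 + Qj i).
Definition fR (i : Z) : R :=
  f (v (i + 1)%Z) + f1 (v (i + 1)%Z) * (DeltaR i + Lk i)
  + th2 / 2 * (f2 (v (i + 1)%Z) * DeltaR i ^ 2 + Qk i).

(** Numerical flux Phi_{i+1/2}. *)
Definition Phi (i : Z) : R :=
  (fL i + fR i) / 2 - Dbar (v i) (v (i + 1)%Z) * (uR i - uL i) / 2.

Definition Ediff (j : Z) : R := (Phi j - Phi (j - 1)%Z) / h.
End Scheme.

Definition QFSR5_E (f : R -> R) (Dbar : R -> R -> R) (v : Z -> R) (h : R)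
  (j : Z) : R :=
  Ediff (1/3) (-2/3) (2/3) (2/15) (16/45) (4/5) f Dbar v h j.

(* With a quadratic flux the scheme is polynomial in the nodal values, and the powers of h
   in h u_x and h^2 u_xx cancel, so E_0 = (F(u_{-3..3}) - dissipation)/h for an h-free F.
   The linear part of F is the classical sixth-order central difference and its quadratic
   part reproduces 2 u u' up to O(h^6) on quintics; on quintics both face jumps u_R - u_L
   equal h^5 u^(5)/24, and D_{1/2} - D_{-1/2} = O(h), so the dissipation costs only
   O(h^5).  Writing u(x + ih) = q(ih) + h^6 e_i with q the Taylor quintic of u at x and
   e_i bounded, linearity of the stencils and polarisation of the quadratic one make every
   term h^5 times a bounded quantity. *)

From Stdlib Require Import Reals ZArith Lra Lia.
From Coquelicot Require Import Coquelicot.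
Open Scope R_scope.

(** * Taylor expansion and C^1 estimates *)

Lemma sum_taylor_at_0 (a : nat -> R) n :
  sum_f_R0 (fun k => 0 ^ k / INR (fact k) * a k) n = a 0%nat.
Proof.
  induction n as [|n IH]; simpl.
  - field.
  - rewrite IH. unfold Rdiv. ring.
Qed.

Lemma Taylor_Lagrange_two_sided (g : R -> R) n x t :
  (forall k y, ex_derive_n g k y) -> t <> 0 ->
  exists z, Rabs (z - x) <= Rabs t /\
    g (x + t) = sum_f_R0 (fun k => t ^ k / INR (fact k) * Derive_n g k x) n
                + t ^ S n / INR (fact (S n)) * Derive_n g (S n) z.
Proof.
  intros Hg Ht. destruct (Rlt_or_le 0 t) as [Hpos | Hneg].
  - destruct (Taylor_Lagrange g n x (x + t)) as [z [Hz Heq]]; [lra | auto |].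
    exists z. rewrite Heq. replace (x + t - x) with t by ring.
    split; [rewrite !Rabs_pos_eq; lra | reflexivity].
  - (* expand s |-> g (- s) to the right of - x *)
    set (w := fun s => g (- s)).
    assert (Hloc : forall m y, locally (- y)
      (fun z : R_UniformSpace => forall k, (k <= m)%nat -> ex_derive_n g k z)).
    { intros m y. apply filter_forall. auto. }
    assert (Hw : forall m y, Derive_n w m y = (-1) ^ m * Derive_n g m (- y)).
    { intros m y. apply Derive_n_comp_opp, Hloc. }
    destruct (Taylor_Lagrange w n (- x) (- x - t)) as [z [Hz Heq]]; [lra | |].
    { intros s _ k _. apply ex_derive_n_comp_opp, Hloc. }
    exists (- z). unfold w in Heq at 1.
    replace (- (- x - t)) with (x + t) in Heq by ring.
    rewrite Heq, Hw. replace (- x - t - - x) with (- t) by ring.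
    split; [rewrite !Rabs_left1; lra |].
    assert (Hsign : forall m, (- t) ^ m * (-1) ^ m = t ^ m)
      by (intros m; rewrite <- Rpow_mult_distr; f_equal; ring).
    f_equal.
    + apply sum_eq. intros k _. rewrite Hw, Ropp_involutive, <- Hsign.
      unfold Rdiv. ring.
    + rewrite <- Hsign. unfold Rdiv. ring.
Qed.

Lemma continuous_bounded_on_interval (F : R -> R) a b :
  (forall z, a <= z <= b -> continuous F z) ->
  exists K, forall z, a <= z <= b -> Rabs (F z) <= K.
Proof.
  intros HF. destruct (Rle_dec a b) as [hab | hab].
  - destruct (continuity_ab_maj (fun z => Rabs (F z)) a b hab) as [m [Hm _]].
    + intros z Hz. apply continuity_pt_filterlim, continuous_Rabs_comp, HF, Hz.
    + exists (Rabs (F m)). exact Hm.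
  - exists 0. intros z Hz. lra.
Qed.

Lemma taylor_remainder_bound (g : R -> R) x n r : smooth1 g ->
  exists M, forall t, Rabs t <= r ->
    Rabs (g (x + t) - sum_f_R0 (fun k => t ^ k / INR (fact k) * Derive_n g k x) n)
    <= M * Rabs t ^ S n.
Proof.
  intros Hg.
  destruct (continuous_bounded_on_interval (Derive_n g (S n)) (x - r) (x + r)) as [K HK].
  { intros z _. apply (@ex_derive_continuous R_AbsRing R_NormedModule), (Hg (S (S n))). }
  exists (K / INR (fact (S n))). intros t Ht.
  destruct (Req_dec t 0) as [-> | Ht0].
  - rewrite Rplus_0_r, sum_taylor_at_0, Rminus_diag, Rabs_R0, pow_i by lia. lra.
  - destruct (Taylor_Lagrange_two_sided g n x t Hg Ht0) as [z [Hz ->]].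
    assert (Hfact : 0 < INR (fact (S n))) by apply INR_fact_lt_0.
    assert (HKz : Rabs (Derive_n g (S n) z) <= K).
    { apply HK. apply Rabs_le_between in Hz. lra. }
    replace (_ + _ - _) with (t ^ S n / INR (fact (S n)) * Derive_n g (S n) z) by ring.
    rewrite Rabs_mult, Rabs_div, <- RPow_abs, (Rabs_pos_eq (INR _)) by lra.
    assert (0 <= Rabs t ^ S n / INR (fact (S n)))
      by (apply Rdiv_le_0_compat; [apply pow_le, Rabs_pos | exact Hfact]).
    unfold Rdiv in *. nra.
Qed.

Definition quintic (u0 u1 u2 u3 u4 u5 t : R) : R :=
  u0 + u1 * t + u2 * t ^ 2 / 2 + u3 * t ^ 3 / 6 + u4 * t ^ 4 / 24 + u5 * t ^ 5 / 120.

Lemma sum_taylor5_quintic (a : nat -> R) t :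
  sum_f_R0 (fun k => t ^ k / INR (fact k) * a k) 5
  = quintic (a 0%nat) (a 1%nat) (a 2%nat) (a 3%nat) (a 4%nat) (a 5%nat) t.
Proof. unfold quintic. simpl. field. Qed.

Lemma Rabs_IZR_stencil i : (-3 <= i <= 3)%Z -> Rabs (IZR i) <= 3.
Proof.
  intros Hi. assert (IZR (-3) <= IZR i <= IZR 3) by (split; apply IZR_le; lia).
  apply Rabs_le. lra.
Qed.

Lemma quintic_grid_remainder u x : smooth1 u ->
  exists M, forall h i, 0 < h <= 1 -> (-3 <= i <= 3)%Z ->
    Rabs (u (x + IZR i * h) - quintic (u x) (Derive u x) (Derive_n u 2 x)
            (Derive_n u 3 x) (Derive_n u 4 x) (Derive_n u 5 x) (IZR i * h))
    <= M * h ^ 6.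
Proof.
  intros Hu. destruct (taylor_remainder_bound u x 5 3 Hu) as [M HM].
  exists (Rabs M * 3 ^ 6). intros h i Hh Hi.
  assert (Hti : Rabs (IZR i * h) <= 3 * h).
  { rewrite Rabs_mult, (Rabs_pos_eq h) by lra.
    apply Rmult_le_compat_r; [lra | exact (Rabs_IZR_stencil i Hi)]. }
  specialize (HM (IZR i * h) ltac:(lra)). rewrite sum_taylor5_quintic in HM.
  eapply Rle_trans; [exact HM |].
  assert (Hpow : Rabs (IZR i * h) ^ 6 <= (3 * h) ^ 6)
    by (apply pow_incr; split; [apply Rabs_pos | exact Hti]).
  rewrite Rpow_mult_distr in Hpow.
  assert (0 <= Rabs (IZR i * h) ^ 6) by (apply pow_le, Rabs_pos).
  pose proof (Rle_abs M). pose proof (Rabs_pos M). nra.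
Qed.

Definition C1 (G : R -> R) : Prop :=
  (forall s, ex_derive G s) /\ (forall s, continuous (Derive G) s).

Lemma C1_lipschitz_at G a r : C1 G ->
  exists K, forall s, Rabs (s - a) <= r -> Rabs (G s - G a) <= K * Rabs (s - a).
Proof.
  intros [HG HC].
  destruct (continuous_bounded_on_interval (Derive G) (a - r) (a + r)) as [K HK].
  { intros z _. apply HC. }
  exists K. intros s Hs.
  destruct (MVT_gen G a s (Derive G)) as [c [Hc ->]].
  { intros y _. apply Derive_correct, HG. }
  { intros y _. apply continuity_pt_filterlim,
      (@ex_derive_continuous R_AbsRing R_NormedModule), HG. }
  rewrite Rabs_mult. apply Rmult_le_compat_r; [apply Rabs_pos |]. apply HK.
  apply Rabs_le_between in Hs. revert Hc. unfold Rmin, Rmax.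
  destruct (Rle_dec a s); lra.
Qed.

Lemma C1_shift u x : smooth1 u -> C1 (fun s => u (x + s)).
Proof.
  intros Hu.
  assert (Hd : forall s, is_derive (fun s => u (x + s)) s (Derive u (x + s))).
  { intros s. auto_derive; [apply (Hu 1%nat) | apply Rmult_1_l]. }
  split.
  - intros s. eexists. apply Hd.
  - intros s. apply (continuous_ext (fun s => Derive u (x + s))).
    { intros t. symmetry. apply is_derive_unique, Hd. }
    apply (continuous_comp (fun s => x + s) (Derive u)).
    + apply (@ex_derive_continuous R_AbsRing R_NormedModule). auto_derive; auto.
    + apply (@ex_derive_continuous R_AbsRing R_NormedModule), (Hu 2%nat).
Qed.

Lemma C1_comp_partial (Dbar : R -> R -> R) c g : smooth2 Dbar -> C1 g ->
  C1 (fun s => Dbar c (g s)).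
Proof.
  intros HDbar [Hg Hg'].
  assert (Hy : forall y, ex_derive (fun t => Dbar c t) y)
    by (intros y; exact (proj2 (proj1 (HDbar nil) c y))).
  assert (Hd : forall s, is_derive (fun s => Dbar c (g s)) s
                         (Derive g s * ipd (cons false nil) Dbar c (g s))).
  { intros s. apply (is_derive_comp (fun t => Dbar c t) g).
    - apply Derive_correct, Hy.
    - apply Derive_correct, Hg. }
  split.
  - intros s. eexists. apply Hd.
  - intros s.
    apply (continuous_ext (fun s => Derive g s * ipd (cons false nil) Dbar c (g s))).
    { intros t. symmetry. apply is_derive_unique, Hd. }
    apply (continuous_mult (Derive g) (fun s => ipd (cons false nil) Dbar c (g s)));
      [apply Hg' |].
    apply (continuous_comp g (fun y => ipd (cons false nil) Dbar c y)).
    + apply (@ex_derive_continuous R_AbsRing R_NormedModule), Hg.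
    + apply (continuous_comp_2 (fun _ => c) (fun y => y)
               (fun a b => ipd (cons false nil) Dbar a b)).
      * apply continuous_const.
      * apply continuous_id.
      * exact (proj2 (HDbar (cons false nil)) (c, g s)).
Qed.

Lemma Dbar_face_lipschitz (Dbar : R -> R -> R) u x :
  smooth2 Dbar -> (forall v w, Dbar v w = Dbar w v) -> smooth1 u ->
  exists L, forall h, 0 < h <= 1 ->
    Rabs (Dbar (u x) (u (x + h)) - Dbar (u x) (u x)) <= L * h /\
    Rabs (Dbar (u (x - h)) (u x) - Dbar (u x) (u x)) <= L * h.
Proof.
  intros HDbar Hsym Hu.
  destruct (C1_lipschitz_at _ 0 1 (C1_comp_partial Dbar (u x) _ HDbar (C1_shift u x Hu)))
    as [L HL].
  exists L. intros h Hh.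
  rewrite (Hsym (u (x - h))). replace (x - h) with (x + - h) by ring.
  pose proof (HL h) as HLr. pose proof (HL (- h)) as HLl. cbv beta in HLr, HLl.
  rewrite Rplus_0_r, Rminus_0_r in HLr, HLl. rewrite Rabs_Ropp, (Rabs_pos_eq h) in * by lra.
  split; [apply HLr; lra | apply HLl; lra].
Qed.

Lemma Derive_quadratic (f : R -> R) al be ga w :
  (forall w, f w = al + be * w + ga * w ^ 2) -> Derive f w = be + 2 * ga * w.
Proof.
  intros Hf. rewrite (Derive_ext f (fun w => al + be * w + ga * w ^ 2)) by auto.
  apply is_derive_unique. auto_derive; auto. ring.
Qed.

Lemma Derive_quadratic_comp (f u : R -> R) al be ga x :
  (forall w, f w = al + be * w + ga * w ^ 2) -> ex_derive u x ->
  Derive (fun y => f (u y)) x = (be + 2 * ga * u x) * Derive u x.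
Proof.
  intros Hf Hu.
  rewrite (Derive_ext _ (fun y => al + be * u y + ga * u y ^ 2)) by auto.
  apply is_derive_unique. auto_derive; [repeat split; exact Hu |].
  change (Derive (fun y => u y) x) with (Derive u x). ring.
Qed.

(** * The QFSR5 flux difference on a quadratic flux *)

Lemma Phi_scale_invariant kap kap3 th2 a b c f Dbar v h i :
  h <> 0 -> Phi kap kap3 th2 a b c f Dbar v h i = Phi kap kap3 th2 a b c f Dbar v 1 i.
Proof.
  intros hn.
  unfold Phi, fL, fR, DeltaL, DeltaR, Lj, Lk, Qj, Qk, uL, uR, Tj, Tk, uxx, ux.
  field; exact hn.
Qed.

(* Face i+1/2 at unit spacing, which by [Phi_scale_invariant] loses nothing. *)
Definition qfsr5_flux (f : R -> R) (v : Z -> R) (i : Z) : R :=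
  (fL (1/3) (-2/3) (2/3) (2/15) (16/45) (4/5) f v 1 i
   + fR (1/3) (-2/3) (2/3) (2/15) (16/45) (4/5) f v 1 i) / 2.

Definition qfsr5_jump (v : Z -> R) (i : Z) : R :=
  uR (1/3) (-2/3) v 1 i - uL (1/3) (-2/3) v 1 i.

Lemma QFSR5_E_split f Dbar v h : h <> 0 ->
  QFSR5_E f Dbar v h 0 =
  (qfsr5_flux f v 0 - qfsr5_flux f v (-1)
   - (Dbar (v 0%Z) (v 1%Z) * qfsr5_jump v 0
      - Dbar (v (-1)%Z) (v 0%Z) * qfsr5_jump v (-1)) / 2) / h.
Proof.
  intros hn. unfold QFSR5_E, Ediff.
  rewrite !(Phi_scale_invariant _ _ _ _ _ _ _ _ _ h) by exact hn.
  unfold Phi, qfsr5_flux, qfsr5_jump. simpl Z.add; simpl Z.sub.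
  field. exact hn.
Qed.

Lemma f1_quadratic (f : R -> R) al be ga w :
  (forall w, f w = al + be * w + ga * w ^ 2) -> f1 f w = be + 2 * ga * w.
Proof. apply Derive_quadratic. Qed.

Lemma f2_quadratic (f : R -> R) al be ga w :
  (forall w, f w = al + be * w + ga * w ^ 2) -> f2 f w = 2 * ga.
Proof.
  intros Hf. unfold f2.
  rewrite (Derive_ext (Derive f) (fun w => be + 2 * ga * w))
    by (intros; apply (Derive_quadratic f al be ga); auto).
  rewrite (Derive_quadratic _ be (2 * ga) 0 w) by (intros; ring). ring.
Qed.

Definition sq (w : R) : R := w ^ 2.

Lemma f1_sq w : f1 sq w = 2 * w.
Proof. rewrite (f1_quadratic sq 0 0 1) by (intros; unfold sq; ring). ring. Qed.

Lemma f2_sq w : f2 sq w = 2.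
Proof. rewrite (f2_quadratic sq 0 0 1) by (intros; unfold sq; ring). ring. Qed.

Lemma qfsr5_flux_quadratic f al be ga v i :
  (forall w, f w = al + be * w + ga * w ^ 2) ->
  qfsr5_flux f v i = al + be * qfsr5_flux id v i + ga * qfsr5_flux sq v i.
Proof.
  intros Hf.
  assert (Hid : forall w, id w = 0 + 1 * w + 0 * w ^ 2) by (intros; unfold id; ring).
  unfold qfsr5_flux, fL, fR, Qj, Qk.
  rewrite !(f1_quadratic f al be ga _ Hf), !(f2_quadratic f al be ga _ Hf),
    !(f1_quadratic id 0 1 0 _ Hid), !(f2_quadratic id 0 1 0 _ Hid), !f1_sq, !f2_sq, !Hf.
  unfold id, sq. field.
Qed.

Definition central_diff6 (v : Z -> R) : R :=
  3/4 * (v 1%Z - v (-1)%Z) - 3/20 * (v 2%Z - v (-2)%Z) + 1/60 * (v 3%Z - v (-3)%Z).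

Lemma qfsr5_flux_id_diff v : qfsr5_flux id v 0 - qfsr5_flux id v (-1) = central_diff6 v.
Proof.
  assert (Hid : forall w, id w = 0 + 1 * w + 0 * w ^ 2) by (intros; unfold id; ring).
  unfold qfsr5_flux, fL, fR, Qj, Qk.
  rewrite !(f1_quadratic id 0 1 0 _ Hid), !(f2_quadratic id 0 1 0 _ Hid).
  unfold central_diff6, DeltaL, DeltaR, Lj, Lk, uL, uR, Tj, Tk, uxx, ux, id.
  simpl Z.add; simpl Z.sub.
  field.
Qed.

Definition qfsr5_sq_diff (v : Z -> R) : R := qfsr5_flux sq v 0 - qfsr5_flux sq v (-1).

Lemma qfsr5_flux_quadratic_diff f al be ga v :
  (forall w, f w = al + be * w + ga * w ^ 2) ->
  qfsr5_flux f v 0 - qfsr5_flux f v (-1) = be * central_diff6 v + ga * qfsr5_sq_diff v.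
Proof.
  intros Hf. rewrite !(qfsr5_flux_quadratic f al be ga) by exact Hf.
  rewrite <- qfsr5_flux_id_diff. unfold qfsr5_sq_diff. ring.
Qed.

Definition sample (p : R -> R) (h : R) : Z -> R := fun i => p (IZR i * h).

Lemma central_diff6_quintic u0 u1 u2 u3 u4 u5 h :
  central_diff6 (sample (quintic u0 u1 u2 u3 u4 u5) h) = h * u1.
Proof. unfold central_diff6, sample, quintic. field. Qed.

Lemma qfsr5_sq_diff_quintic u0 u1 u2 u3 u4 u5 h :
  qfsr5_sq_diff (sample (quintic u0 u1 u2 u3 u4 u5) h) =
  2 * h * u0 * u1 + h ^ 7 * (37/1080 * u2 * u5 + 17/360 * u3 * u4)
  + 79/3240 * h ^ 9 * u4 * u5.
Proof.
  unfold qfsr5_sq_diff, qfsr5_flux, fL, fR, Qj, Qk. rewrite !f1_sq, !f2_sq.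
  unfold DeltaL, DeltaR, Lj, Lk, uL, uR, Tj, Tk, uxx, ux, sq, sample, quintic.
  simpl Z.add; simpl Z.sub.
  field.
Qed.

Lemma qfsr5_jump_quintic u0 u1 u2 u3 u4 u5 h i :
  qfsr5_jump (sample (quintic u0 u1 u2 u3 u4 u5) h) i = h ^ 5 * u5 / 24.
Proof.
  unfold qfsr5_jump, uR, uL, Tj, Tk, uxx, ux, sample, quintic; cbv beta.
  repeat (rewrite plus_IZR || rewrite minus_IZR). field.
Qed.

Lemma central_diff6_shift v w e s :
  (forall i, v i = w i + s * e i) -> central_diff6 v = central_diff6 w + s * central_diff6 e.
Proof. intros Hv. unfold central_diff6. rewrite !Hv. ring. Qed.

Lemma qfsr5_jump_shift v w e s i :
  (forall i, v i = w i + s * e i) -> qfsr5_jump v i = qfsr5_jump w i + s * qfsr5_jump e i.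
Proof.
  intros Hv. unfold qfsr5_jump, uR, uL, Tj, Tk, uxx, ux. rewrite !Hv. field.
Qed.

Lemma qfsr5_sq_diff_shift v w e s :
  (forall i, v i = w i + s * e i) ->
  qfsr5_sq_diff v = qfsr5_sq_diff w
    + s * (qfsr5_sq_diff (fun i => w i + e i) - qfsr5_sq_diff w - qfsr5_sq_diff e)
    + s ^ 2 * qfsr5_sq_diff e.
Proof.
  intros Hv.
  unfold qfsr5_sq_diff, qfsr5_flux, fL, fR, Qj, Qk. rewrite !f1_sq, !f2_sq.
  unfold DeltaL, DeltaR, Lj, Lk, uL, uR, Tj, Tk, uxx, ux, sq. rewrite !Hv.
  field.
Qed.

Lemma QFSR5_E_quintic_defect f al be ga Dbar v e h u0 u1 u2 u3 u4 u5 g0 d0 d1 :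
  h <> 0 -> (forall w, f w = al + be * w + ga * w ^ 2) ->
  (forall i, v i = quintic u0 u1 u2 u3 u4 u5 (IZR i * h) + h ^ 6 * e i) ->
  Dbar (v 0%Z) (v 1%Z) = g0 + h * d0 -> Dbar (v (-1)%Z) (v 0%Z) = g0 - h * d1 ->
  let p := sample (quintic u0 u1 u2 u3 u4 u5) h in
  QFSR5_E f Dbar v h 0 - (be + 2 * ga * u0) * u1 = h ^ 5 *
    (be * central_diff6 e
     + ga * (h * (37/1080 * u2 * u5 + 17/360 * u3 * u4) + 79/3240 * h ^ 3 * u4 * u5
             + (qfsr5_sq_diff (fun i => p i + e i) - qfsr5_sq_diff p - qfsr5_sq_diff e)
             + h ^ 6 * qfsr5_sq_diff e)
     - (g0 * (qfsr5_jump e 0 - qfsr5_jump e (-1))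
        + d0 * (u5 / 24 + h * qfsr5_jump e 0) + d1 * (u5 / 24 + h * qfsr5_jump e (-1))) / 2).
Proof.
  intros hn Hf Hv HD0 HD1 p.
  assert (Hvp : forall i, v i = p i + h ^ 6 * e i) by exact Hv.
  rewrite QFSR5_E_split, HD0, HD1, (qfsr5_flux_quadratic_diff f al be ga v Hf) by exact hn.
  rewrite (central_diff6_shift v p e (h ^ 6) Hvp), (qfsr5_sq_diff_shift v p e (h ^ 6) Hvp),
    (qfsr5_jump_shift v p e (h ^ 6) 0 Hvp), (qfsr5_jump_shift v p e (h ^ 6) (-1) Hvp).
  unfold p. rewrite central_diff6_quintic, qfsr5_sq_diff_quintic, !qfsr5_jump_quintic.
  field. exact hn.
Qed.

(** * Bounds on the stencils *)

Lemma Rabs_add_le x y X Y : Rabs x <= X -> Rabs y <= Y -> Rabs (x + y) <= X + Y.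
Proof. intros. eapply Rle_trans; [apply Rabs_triang | lra]. Qed.

Lemma Rabs_sub_le x y X Y : Rabs x <= X -> Rabs y <= Y -> Rabs (x - y) <= X + Y.
Proof. intros. eapply Rle_trans; [apply Rabs_triang | rewrite Rabs_Ropp; lra]. Qed.

Lemma Rabs_opp_le x X : Rabs x <= X -> Rabs (- x) <= X.
Proof. rewrite Rabs_Ropp. auto. Qed.

Lemma Rabs_mul_le x y X Y : Rabs x <= X -> Rabs y <= Y -> Rabs (x * y) <= X * Y.
Proof. intros. rewrite Rabs_mult. apply Rmult_le_compat; auto; apply Rabs_pos. Qed.

Lemma Rabs_pow_le x n X : Rabs x <= X -> Rabs (x ^ n) <= X ^ n.
Proof. intros. rewrite <- RPow_abs. apply pow_incr. split; auto. apply Rabs_pos. Qed.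

Lemma Rabs_div_le x y X : Rabs x <= X -> Rabs (x / y) <= X * Rabs (/ y).
Proof. intros. unfold Rdiv. rewrite Rabs_mult. apply Rmult_le_compat_r; auto. apply Rabs_pos. Qed.

(* Proves [Rabs e <= ?C] by recursion on [e], using the hypotheses [Rabs a <= _] for the
   atoms [a] and [Rabs c] itself for the remaining ones.  Called on an evar created by
   [eexists] before the atoms are introduced, it produces a bound independent of them. *)
Ltac bound_abs :=
  match goal with
  | H : Rabs ?x <= _ |- Rabs ?x <= _ => exact H
  | |- Rabs (_ + _) <= _ => eapply Rabs_add_le; [bound_abs | bound_abs]
  | |- Rabs (_ - _) <= _ => eapply Rabs_sub_le; [bound_abs | bound_abs]
  | |- Rabs (- _) <= _ => eapply Rabs_opp_le; bound_abs
  | |- Rabs (_ * _) <= _ => eapply Rabs_mul_le; [bound_abs | bound_abs]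
  | |- Rabs (_ ^ _) <= _ => eapply Rabs_pow_le; bound_abs
  | |- Rabs (_ / _) <= _ => eapply Rabs_div_le; bound_abs
  | |- Rabs _ <= _ => apply Rle_refl
  end.

Lemma Rabs_div_le_of_le a p M : 0 < p -> Rabs a <= M * p -> Rabs (a / p) <= M.
Proof.
  intros Hp Ha. unfold Rdiv. rewrite Rabs_mult, Rabs_inv, (Rabs_pos_eq p) by lra.
  apply (Rmult_le_reg_r p); [exact Hp |]. rewrite Rmult_assoc, Rinv_l by lra. lra.
Qed.

Definition stencil_bounded (v : Z -> R) (M : R) : Prop :=
  forall i, (-3 <= i <= 3)%Z -> Rabs (v i) <= M.

Lemma stencil_bounded_values v M : stencil_bounded v M ->
  Rabs (v (-3)%Z) <= M /\ Rabs (v (-2)%Z) <= M /\ Rabs (v (-1)%Z) <= M /\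
  Rabs (v 0%Z) <= M /\ Rabs (v 1%Z) <= M /\ Rabs (v 2%Z) <= M /\ Rabs (v 3%Z) <= M.
Proof. intros Hv. repeat split; apply Hv; lia. Qed.

Lemma stencil_bounded_add v e K M : stencil_bounded v K -> stencil_bounded e M ->
  stencil_bounded (fun i => v i + e i) (K + M).
Proof. intros Hv He i Hi. apply Rabs_add_le; auto. Qed.

Lemma quintic_stencil_bounded u0 u1 u2 u3 u4 u5 :
  exists K, forall h, Rabs h <= 1 -> stencil_bounded (sample (quintic u0 u1 u2 u3 u4 u5) h) K.
Proof.
  eexists. intros h Hh i Hi. unfold sample, quintic.
  assert (Rabs (IZR i * h) <= 3 * 1).
  { rewrite Rabs_mult. apply Rmult_le_compat; auto using Rabs_pos, Rabs_IZR_stencil. }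
  bound_abs.
Qed.

Lemma central_diff6_bounded M :
  exists C, forall v, stencil_bounded v M -> Rabs (central_diff6 v) <= C.
Proof.
  eexists. intros v Hv. destruct (stencil_bounded_values v M Hv) as (?&?&?&?&?&?&?).
  unfold central_diff6. bound_abs.
Qed.

Lemma qfsr5_jump_bounded M i : (-1 <= i <= 0)%Z ->
  exists C, forall v, stencil_bounded v M -> Rabs (qfsr5_jump v i) <= C.
Proof.
  intros Hi. assert (i = -1 \/ i = 0)%Z as [-> | ->] by lia;
    eexists; intros v Hv; destruct (stencil_bounded_values v M Hv) as (?&?&?&?&?&?&?);
    unfold qfsr5_jump, uR, uL, Tj, Tk, uxx, ux; simpl Z.add; simpl Z.sub; bound_abs.
Qed.

Lemma qfsr5_sq_diff_bounded M :
  exists C, forall v, stencil_bounded v M -> Rabs (qfsr5_sq_diff v) <= C.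
Proof.
  eexists. intros v Hv. destruct (stencil_bounded_values v M Hv) as (?&?&?&?&?&?&?).
  unfold qfsr5_sq_diff, qfsr5_flux, fL, fR, Qj, Qk. rewrite !f1_sq, !f2_sq.
  unfold DeltaL, DeltaR, Lj, Lk, uL, uR, Tj, Tk, uxx, ux, sq. simpl Z.add; simpl Z.sub.
  bound_abs.
Qed.

Lemma QFSR5_E_quintic_error be ga u0 u1 u2 u3 u4 u5 g0 M L :
  exists C, forall f al Dbar v e h,
    (forall w, f w = al + be * w + ga * w ^ 2) -> 0 < h <= 1 ->
    (forall i, v i = quintic u0 u1 u2 u3 u4 u5 (IZR i * h) + h ^ 6 * e i) ->
    stencil_bounded e M ->
    Rabs (Dbar (v 0%Z) (v 1%Z) - g0) <= L * h ->
    Rabs (Dbar (v (-1)%Z) (v 0%Z) - g0) <= L * h ->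
    Rabs (QFSR5_E f Dbar v h 0 - (be + 2 * ga * u0) * u1) <= C * h ^ 5.
Proof.
  destruct (quintic_stencil_bounded u0 u1 u2 u3 u4 u5) as [K HK].
  destruct (central_diff6_bounded M) as [C6 HC6].
  destruct (qfsr5_sq_diff_bounded (K + M)) as [Qpe HQpe].
  destruct (qfsr5_sq_diff_bounded K) as [Qp HQp].
  destruct (qfsr5_sq_diff_bounded M) as [Qe HQe].
  destruct (qfsr5_jump_bounded M 0 ltac:(lia)) as [J0 HJ0].
  destruct (qfsr5_jump_bounded M (-1) ltac:(lia)) as [J1 HJ1].
  eexists. intros f al Dbar v e h Hf Hh Hv He HD0 HD1.
  assert (hn : h <> 0) by lra.
  rewrite (QFSR5_E_quintic_defect f al be ga Dbar v e h u0 u1 u2 u3 u4 u5 g0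
             ((Dbar (v 0%Z) (v 1%Z) - g0) / h) ((g0 - Dbar (v (-1)%Z) (v 0%Z)) / h))
    by (assumption || (field; exact hn)).
  rewrite Rabs_mult, (Rabs_pos_eq (h ^ 5)) by (apply pow_le; lra).
  rewrite Rmult_comm. apply Rmult_le_compat_r; [apply pow_le; lra |].
  assert (Habs_h : Rabs h <= 1) by (rewrite Rabs_pos_eq; lra).
  assert (Hp : stencil_bounded (sample (quintic u0 u1 u2 u3 u4 u5) h) K) by auto.
  rewrite Rabs_minus_sym in HD1.
  pose proof (Rabs_div_le_of_le _ h L ltac:(lra) HD0).
  pose proof (Rabs_div_le_of_le _ h L ltac:(lra) HD1).
  pose proof (HC6 e He). pose proof (HJ0 e He). pose proof (HJ1 e He).
  pose proof (HQpe _ (stencil_bounded_add _ e K M Hp He)).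
  pose proof (HQp _ Hp). pose proof (HQe e He).
  bound_abs.
Qed.

Theorem mainTheorem8 :
  forall (f : R -> R) (D : R -> R) (Dbar : R -> R -> R) (u : R -> R),
    (exists al be ga : R, forall w, f w = al + be * w + ga * w ^ 2) ->
    smooth1 D ->
    smooth2 Dbar ->
    (forall v w, Dbar v w = Dbar w v) ->
    (forall w, Dbar w w = D w) ->
    smooth1 u ->
    forall x : R,
      exists C delta : R, 0 < delta /\
        forall h : R, 0 < h < delta ->
          Rabs (QFSR5_E f Dbar (fun i : Z => u (x + IZR i * h)) h 0%Z
                - Derive (fun y => f (u y)) x) <= C * h ^ 5.
Proof.
  (* Only the smoothness and symmetry of [Dbar] matter. *)
  intros f D Dbar u [al [be [ga Hf]]] _ HDbar Hsym _ Hu x.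
  set (q := quintic (u x) (Derive u x) (Derive_n u 2 x) (Derive_n u 3 x)
                    (Derive_n u 4 x) (Derive_n u 5 x)).
  destruct (quintic_grid_remainder u x Hu) as [M HM].
  destruct (Dbar_face_lipschitz Dbar u x HDbar Hsym Hu) as [L HL].
  destruct (QFSR5_E_quintic_error be ga (u x) (Derive u x) (Derive_n u 2 x) (Derive_n u 3 x)
              (Derive_n u 4 x) (Derive_n u 5 x) (Dbar (u x) (u x)) M L) as [C HC].
  exists C, 1. split; [lra |]. intros h Hh.
  assert (Hh6 : 0 < h ^ 6) by (apply pow_lt; lra).
  destruct (HL h ltac:(lra)) as [HLr HLl].
  rewrite (Derive_quadratic_comp f u al be ga x Hf (Hu 1%nat x)).
  apply (HC f al Dbar _ (fun i => (u (x + IZR i * h) - q (IZR i * h)) / h ^ 6) h Hf);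
    [lra | intros i; unfold q; field; lra | | |].
  - intros i Hi. apply Rabs_div_le_of_le; [exact Hh6 | apply HM; [lra | exact Hi]].
  - replace (x + IZR 0 * h) with x by ring. replace (x + IZR 1 * h) with (x + h) by ring.
    exact HLr.
  - replace (x + IZR 0 * h) with x by ring. replace (x + IZR (-1) * h) with (x - h) by ring.
    exact HLl.
Qed.
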